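(* For all $n,d\in\mathbb{N}$ and every object $G$ of $\mathbf{gr}$, there is a natural isomorphism (indeed an equality of subgroups of $P^{\mathbf{gr}}_n(G)=\mathbb{Z}[G^n]$) $$K^d_n(G)\simeq\mathcal{I}^{d+1}(G^n).$$
   Context: $\mathbf{gr}$ is the category of free groups $\mathbb{Z}^{*n}$ ($n\in\mathbb{N}$) and homomorphisms; $\mathcal{F}(\mathbf{gr})$ is the category of functors $\mathbf{gr}\to\mathbf{Ab}$. Cross effects: $cr_n(F)(G_1,\dots,G_n)=\ker\big(F(G_1*\dots*G_n)\to\bigoplus_i F(G_1*\dots*\widehat{G_i}*\dots*G_n)\big)$; $F$ is polynomial of degree $\le d$ if $cr_{d+1}(F)=0$; $\mathcal{F}_d(\mathbf{gr})$ is the full subcategory of such functors. The inclusion $\mathcal{F}_d(\mathbf{gr})\to\mathcal{F}(\mathbf{gr})$ has a left adjoint $q_d$, $q_d(F)$ being the largest quotient of $F$ lying in $\mathcal{F}_d(\mathbf{gr})$. $P^{\mathbf{gr}}_n=\mathbb{Z}[\mathbf{gr}(\mathbb{Z}^{*n},-)]$, canonically identified with $G\mapsto\mathbb{Z}[G^n]$. $K^d_n:=\ker(P^{\mathbf{gr}}_n\twoheadrightarrow q_d(P^{\mathbf{gr}}_n))$. $\mathcal{I}^{r}(\Gamma)$ is the $r$-th power of the augmentation ideal of $\mathbb{Z}[\Gamma]$. *)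

From HB Require Import structures.
From mathcomp Require Import all_boot all_order all_algebra.
From mathcomp Require Import freeg.
Set Implicit Arguments. Unset Strict Implicit. Unset Printing Implicit Defensive.
Import Order.TTheory GRing.Theory Num.Theory.
Local Open Scope ring_scope.

(* The free group Z^{*m} on generators 'I_m, as reduced words.             *)
(* A letter (j, false) is the generator x_j, (j, true) is x_j^{-1}.        *)
Definition letter (m : nat) := ('I_m * bool)%type.

Definition cancels (m : nat) (x y : letter m) : bool :=
  (x.1 == y.1) && (x.2 != y.2).

Fixpoint wred (m : nat) (w : seq (letter m)) : bool :=
  match w with
  | x :: ((y :: _) as w') => ~~ cancels x y && wred w'
  | _ => true
  end.

Definition FG (m : nat) := {w : seq (letter m) | wred w}.

Definition fone (m : nat) : FG m := exist _ [::] isT.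

Definition push (m : nat) (x : letter m) (s : seq (letter m)) : seq (letter m) :=
  match s with
  | y :: s' => if cancels x y then s' else x :: s
  | [::] => [:: x]
  end.

Definition fmul (m : nat) (u v : FG m) : FG m :=
  insubd (fone m) (foldr (@push m) (val v) (val u)).

Definition finv (m : nat) (u : FG m) : FG m :=
  insubd (fone m) (rev (map (fun x : letter m => (x.1, ~~ x.2)) (val u))).

Definition gen (m : nat) (j : 'I_m) : FG m := insubd (fone m) [:: (j, false)].

(* The homomorphism Z^{*k} -> Z^{*m} sending x_j to f j.  Every morphism
   of gr(Z^{*k}, Z^{*m}) is of this form, for a unique f. *)
Definition ext (k m : nat) (f : 'I_k -> FG m) (w : FG k) : FG m :=
  foldr (fun x acc => fmul (if x.2 then finv (f x.1) else f x.1) acc)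
        (fone m) (val w).

(* The group G^n (for G = Z^{*m}) and the group ring Z[G^n] = P_n^gr(G).   *)
Definition Gn (n m : nat) := {ffun 'I_n -> FG m}.

Definition gmul (n m : nat) (a b : Gn n m) : Gn n m := [ffun i => fmul (a i) (b i)].
Definition gone (n m : nat) : Gn n m := [ffun _ => fone m].

Definition ZG (n m : nat) := {freeg (Gn n m) / int}.

Definition basis (n m : nat) (g : Gn n m) : ZG n m := [freeg [:: ((1 : int), g)]].

Definition zmul (n m : nat) (D1 D2 : ZG n m) : ZG n m :=
  fglift (fun g => fglift (fun h => basis (gmul g h)) D2) D1.
Definition zone (n m : nat) : ZG n m := basis (gone n m).

Definition Pmap (n k m : nat) (phi : FG k -> FG m) (D : ZG n k) : ZG n m :=
  fglift (fun g : Gn n k => basis [ffun i => phi (g i)]) D.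

Definition aug_ideal (n m : nat) (D : ZG n m) : Prop := deg D = 0.

(* additive subgroup generated by a predicate (finite sums of its elements;
   the predicates it is applied to below are closed under negation) *)
Definition addspan (n m : nat) (P : ZG n m -> Prop) (D : ZG n m) : Prop :=
  exists s : seq (ZG n m), (forall x, x \in s -> P x) /\ D = \sum_(x <- s) x.

Fixpoint idealpow (n m : nat) (r : nat) : ZG n m -> Prop :=
  match r with
  | 0 => fun _ => True
  | r'.+1 => @addspan n m (fun x => exists a b : ZG n m,
                 @idealpow n m r' a /\ @aug_ideal n m b /\ x = zmul a b)
  end.

(* Subfunctors of P_n^gr (on the skeleton {Z^{*m}}), polynomial quotients. *)
Definition subfunctor (n : nat) (S : forall m, ZG n m -> Prop) : Prop :=
  (forall m, S m 0) /\
  (forall m x y, S m x -> S m y -> S m (x - y)) /\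
  (forall k m (f : 'I_k -> FG m) (D : ZG n k), S k D -> S m (@Pmap n k m (ext f) D)).

(* the endomorphism of Z^{*N} killing the generators of colour i
   (composite of the retraction G_1*..*G_{d+1} -> G_1*..^G_i..*G_{d+1}
    with the canonical inclusion, where G_i is generated by colour-i generators) *)
Definition kill (N d : nat) (c : 'I_N -> 'I_d.+1) (i : 'I_d.+1) (j : 'I_N) : FG N :=
  if c j == i then fone N else gen j.

(* the quotient functor P_n^gr / S has cr_{d+1} = 0 *)
Definition quot_poly_le (d n : nat) (S : forall m, ZG n m -> Prop) : Prop :=
  forall N (c : 'I_N -> 'I_d.+1) (D : ZG n N),
    (forall i, S N (@Pmap n N N (ext (kill c i)) D)) -> S N D.

(* K^d_n = ker (P_n -> q_d P_n): the smallest subfunctor S of P_n with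
   P_n / S in F_d(gr), i.e. the intersection of all of them. *)
Definition Kdn (d n m : nat) (D : ZG n m) : Prop :=
  forall S, subfunctor S -> quot_poly_le d S -> S m D.

(* The monomials [g (x_1 - 1) ... (x_(d+1) - 1)] span I^(d+1) additively.
   Each is the image, under a morphism of free groups, of one universal
   monomial on (d+2)n generators, coloured so that killing any colour kills
   one of its factors; so every subfunctor of P_n with polynomial quotient of
   degree <= d contains it, hence contains I^(d+1).
   Conversely I^(d+1) is such a subfunctor.  Let [k_i] be the ring
   endomorphism killing colour [i] and [T_s] the composite of the [1 - k_i],
   [i \in s].  Then [x - T_s x] lies in I^(d+1) as soon as every [k_i x]
   does, while [T_s] maps Z[G^n] into I^(|s|): writing [g] as a product of
   letters, a letter [e] of colour [c] contributes
   [T_s (y e) = T_s y + T_(s - c) y (e - 1)], and induction on the word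
   concludes. *)
From Pilot Require Import Defs.
From HB Require Import structures.
From mathcomp Require Import all_boot all_order all_algebra.
From mathcomp Require Import freeg.
Set Implicit Arguments. Unset Strict Implicit. Unset Printing Implicit Defensive.
Import GRing.Theory.
(* [fintype] also exports a [finv]. *)
Local Notation finv := Defs.finv.

Section FreeReduction.
Variable m : nat.
Implicit Types (x : letter m) (s t w : seq (letter m)).

Definition linv x : letter m := (x.1, ~~ x.2).

Lemma linvK : involutive linv.
Proof. by case=> a b; rewrite /linv negbK. Qed.

Lemma cancelsE x y : cancels x y = (y == linv x).
Proof. by case: x y => a b [a' b']; rewrite /cancels xpair_eqE eq_sym; case: b b' => [] []. Qed.

Lemma wredE s : wred s = sorted (fun x y => ~~ cancels x y) s.
Proof. by elim: s => // x [|y s] //= ->. Qed.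

Lemma wred_behead x s : wred (x :: s) -> wred s.
Proof. by case: s => //= y s /andP[]. Qed.

Lemma wred_push x s : wred s -> wred (push x s).
Proof. by case: s => //= y s ws; case: ifP => [_|/= ->]; [apply: wred_behead ws|]. Qed.

Lemma push_linv x s : wred s -> push (linv x) (push x s) = s.
Proof.
have cxx : cancels (linv x) x by rewrite cancelsE linvK.
case: s => [|y s] /=; first by rewrite cxx.
case: ifPn => [|nxy]; last by rewrite /= cxx.
rewrite cancelsE => /eqP ->; case: s => [|z s] //= /andP[nyz _].
by rewrite cancelsE in nyz *; rewrite (negbTE nyz).
Qed.

Lemma wred_rev_linv s : wred s -> wred (rev (map linv s)).
Proof.
rewrite !wredE rev_sorted sorted_map; apply: sub_sorted => x y.
by rewrite /cancels /linv /= eq_sym; case: x.2; case: y.2.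
Qed.

(* [pushs s t] is the reduced form of [s ++ t] when [t] is reduced. *)
Definition pushs s t := foldr (@push m) t s.
Definition red s := pushs s [::].

Lemma pushs_cat s t w : pushs (s ++ t) w = pushs s (pushs t w).
Proof. exact: foldr_cat. Qed.

Lemma wred_pushs s t : wred t -> wred (pushs s t).
Proof. by elim: s => //= x s IH /IH; apply: wred_push. Qed.

Lemma red_wred s : wred s -> red s = s.
Proof.
elim: s => // x s IH ws; rewrite /red /= -/(red s) IH; last exact: wred_behead ws.
by case: s ws {IH} => //= y s /andP[/negbTE ->].
Qed.

Lemma pushs_push x s t : wred t -> pushs (push x s) t = push x (pushs s t).
Proof.
move=> wt; case: s => [|y s] //=; case: ifPn => //; rewrite cancelsE => /eqP ->.
by have := push_linv (linv x) (wred_pushs s wt); rewrite linvK.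
Qed.

Lemma pushs_red s t : wred t -> pushs (red s) t = pushs s t.
Proof. by move=> wt; elim: s => //= x s IH; rewrite pushs_push // IH. Qed.

Lemma pushs_rev_linv s t : wred t -> pushs (rev (map linv s)) (pushs s t) = t.
Proof.
elim: s t => //= x s IH t wt.
by rewrite rev_cons -cats1 pushs_cat /= push_linv ?wred_pushs ?IH.
Qed.

Lemma pushs_linv_rev s t : wred t -> pushs s (pushs (rev (map linv s)) t) = t.
Proof.
have {1}-> : s = rev (map linv (rev (map linv s))).
  by rewrite map_rev revK -map_comp (eq_map linvK) map_id.
exact: pushs_rev_linv.
Qed.
End FreeReduction.

Section FreeGroupLaws.
Variable m : nat.
Implicit Types u v w : FG m.

Lemma val_fmul u v : val (fmul u v) = pushs (val u) (val v).
Proof. by rewrite /fmul insubdK //; apply/wred_pushs/valP. Qed.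

Lemma val_finv u : val (finv u) = rev (map (@linv m) (val u)).
Proof. by rewrite /finv insubdK //; apply/wred_rev_linv/valP. Qed.

Lemma fmul1g : left_id (fone m) (@fmul m).
Proof. by move=> u; apply: val_inj; rewrite val_fmul. Qed.

Lemma fmulg1 : right_id (fone m) (@fmul m).
Proof. by move=> u; apply: val_inj; rewrite val_fmul; apply/red_wred/valP. Qed.

Lemma fmulA : associative (@fmul m).
Proof.
move=> u v w; apply: val_inj; rewrite !val_fmul.
have -> : pushs (val u) (val v) = red (val u ++ val v).
  by rewrite /red pushs_cat -/(red _) red_wred //; apply: valP.
by rewrite pushs_red ?pushs_cat //; apply: valP.
Qed.

Lemma fmulVg u : fmul (finv u) u = fone m.
Proof.
apply: val_inj; rewrite val_fmul val_finv -{2}(red_wred (valP u)).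
exact: pushs_rev_linv.
Qed.

Lemma fmulgV u : fmul u (finv u) = fone m.
Proof.
apply: val_inj; rewrite val_fmul val_finv -(red_wred (wred_rev_linv (valP u))).
exact: pushs_linv_rev.
Qed.

HB.instance Definition _ :=
  Monoid.isLaw.Build (FG m) (fone m) (@fmul m) fmulA fmul1g fmulg1.

Definition fletter (x : letter m) : FG m := insubd (fone m) [:: x].

Lemma val_fletter x : val (fletter x) = [:: x].
Proof. by rewrite insubdK. Qed.

Lemma finv_fletter x : finv (fletter x) = fletter (linv x).
Proof. by apply: val_inj; rewrite val_finv !val_fletter. Qed.

Lemma finv1 : finv (fone m) = fone m.
Proof. by apply: val_inj; rewrite val_finv. Qed.

Lemma prod_fletter u : \big[@fmul m/fone m]_(x <- val u) fletter x = u.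
Proof.
apply: val_inj; rewrite -[RHS](red_wred (valP u)); elim: (val u) => [|x s IH].
  by rewrite big_nil.
by rewrite big_cons val_fmul IH val_fletter.
Qed.
End FreeGroupLaws.

Section Extension.
Variables k m : nat.
Variable f : 'I_k -> FG m.

Definition ext_letter (x : letter k) : FG m := if x.2 then finv (f x.1) else f x.1.

Lemma extE u : ext f u = \big[@fmul m/fone m]_(x <- val u) ext_letter x.
Proof. by rewrite unlock. Qed.

Lemma ext_letter_linv x : fmul (ext_letter (linv x)) (ext_letter x) = fone m.
Proof. by case: x => a []; rewrite /ext_letter /linv /= ?fmulgV ?fmulVg. Qed.

Lemma big_ext_letter_push x s :
  \big[@fmul m/fone m]_(y <- push x s) ext_letter y =
  fmul (ext_letter x) (\big[@fmul m/fone m]_(y <- s) ext_letter y).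
Proof.
case: s => [|y s] /=; first by rewrite big_seq1 big_nil fmulg1.
case: ifPn => [|_]; last by rewrite big_cons.
rewrite cancelsE => /eqP ->; rewrite big_cons fmulA.
by have := ext_letter_linv (linv x); rewrite linvK => ->; rewrite fmul1g.
Qed.

Lemma ext_mul u v : ext f (fmul u v) = fmul (ext f u) (ext f v).
Proof.
rewrite !extE val_fmul; elim: (val u) => [|x s IH]; first by rewrite big_nil fmul1g.
by rewrite big_cons /= big_ext_letter_push IH fmulA.
Qed.

Lemma ext_one : ext f (fone k) = fone m.
Proof. by rewrite extE big_nil. Qed.

Lemma ext_fletter x : ext f (fletter x) = ext_letter x.
Proof. by rewrite extE val_fletter big_seq1. Qed.

Lemma ext_gen j : ext f (gen j) = f j.
Proof. exact: ext_fletter. Qed.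
End Extension.

Lemma ext_letter_gen m (x : letter m) : ext_letter (@gen m) x = fletter x.
Proof. by case: x => a []; rewrite /ext_letter //= finv_fletter. Qed.

Section PowerGroup.
Variables n m : nat.
Implicit Types g h : Gn n m.

Lemma gmul1g : left_id (gone n m) (@gmul n m).
Proof. by move=> g; apply/ffunP => i; rewrite !ffunE fmul1g. Qed.

Lemma gmulg1 : right_id (gone n m) (@gmul n m).
Proof. by move=> g; apply/ffunP => i; rewrite !ffunE fmulg1. Qed.

Lemma gmulA : associative (@gmul n m).
Proof. by move=> g1 g2 g3; apply/ffunP => i; rewrite !ffunE fmulA. Qed.

HB.instance Definition _ :=
  Monoid.isLaw.Build (Gn n m) (gone n m) (@gmul n m) gmulA gmul1g gmulg1.

Definition letter_elt (c : 'I_n) (x : letter m) : Gn n m :=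
  [ffun i => if i == c then fletter x else fone m].

Definition letters g : seq ('I_n * letter m) :=
  [seq (c, x) | c <- enum 'I_n, x <- val (g c)].

Lemma prod_letter_elt g : \big[@gmul n m/gone n m]_(p <- letters g) letter_elt p.1 p.2 = g.
Proof.
apply/ffunP => i; rewrite (big_morph (fun h : Gn n m => h i) (id1 := fone m) (op1 := @fmul m));
  [|by move=> ? ?; rewrite ffunE | by rewrite ffunE].
rewrite big_allpairs_dep /=.
have row c : \big[@fmul m/fone m]_(x <- val (g c)) letter_elt c x i =
             if c == i then g c else fone m.
  under eq_bigr => x _ do rewrite ffunE eq_sym.
  by case: eqP => _; [apply: prod_fletter | apply: big1_eq].
under eq_bigr => c _ do rewrite row.
by rewrite -big_mkcond -big_filter filter_pred1_uniq ?enum_uniq ?mem_enum // big_seq1.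
Qed.
End PowerGroup.

HB.instance Definition _ (K : choiceType) (M : lmodType int) (F : K -> M) :=
  GRing.isZmodMorphism.Build {freeg K / int} M (fglift F) (lift_is_additive F).

Lemma subrACA (V : zmodType) (a b c d : V) : (a - b - (c - d) = (a - c) - (b - d))%R.
Proof. by rewrite !opprD !opprK addrACA. Qed.

Section GroupRing.
Variables n m : nat.
Local Open Scope ring_scope.
Implicit Types (x y z : ZG n m) (g h : Gn n m).

Lemma fglift_basis (M : lmodType int) (F : Gn n m -> M) g : fglift F (basis g) = F g.
Proof. by rewrite /basis liftU scale1r. Qed.

Lemma ZG_ind (P : ZG n m -> Prop) :
  P 0 -> (forall x y, P x -> P y -> P (x - y)) -> (forall g, P (basis g)) -> forall x, P x.
Proof.
move=> P0 PB Pg x; have PN y : P y -> P (- y) by rewrite -sub0r; apply: PB.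
have PD y z : P y -> P z -> P (y + z) by move=> Py /PN; rewrite -{2}[z]opprK; apply: PB.
have PMn y k : P y -> P (y *+ k).
  by move=> Py; elim: k => [|k]; rewrite ?mulr0n ?mulrS //; apply: PD.
rewrite -[x]freeg_sumE; elim: (dom x) => [|g s IH]; first by rewrite big_nil.
rewrite big_cons; apply: PD => //; rewrite -[X in << X *g _ >>]intz -freeg_mulz.
by case: (coeff g x) => k /=; [apply: PMn | apply/PN/PMn]; apply: Pg.
Qed.

Lemma zmulDl : left_distributive (@zmul n m) +%R.
Proof. by move=> x y z; rewrite /zmul raddfD. Qed.

Lemma zmulBl x y z : zmul (x - y) z = zmul x z - zmul y z.
Proof. by rewrite /zmul raddfB. Qed.

Lemma zmul0l z : zmul 0 z = 0.
Proof. by rewrite /zmul raddf0. Qed.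

Lemma zmul_basisl g y : zmul (basis g) y = fglift (fun h => basis (gmul g h)) y.
Proof. exact: fglift_basis. Qed.

Lemma zmul_basis g h : zmul (basis g) (basis h) = basis (gmul g h).
Proof. by rewrite zmul_basisl fglift_basis. Qed.

Lemma zmulBr x y z : zmul x (y - z) = zmul x y - zmul x z.
Proof.
elim/ZG_ind: x => [|x1 x2 IH1 IH2|g]; first by rewrite !zmul0l subr0.
  by rewrite !zmulBl IH1 IH2 subrACA.
by rewrite !zmul_basisl raddfB.
Qed.

Lemma zmul0r x : zmul x 0 = 0.
Proof. by rewrite -[0 in LHS](subr0 0) zmulBr subrr. Qed.

Lemma zmulA : associative (@zmul n m).
Proof.
move=> x y z; elim/ZG_ind: x => [|x1 x2 IH1 IH2|g]; first by rewrite !zmul0l.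
  by rewrite !zmulBl IH1 IH2.
elim/ZG_ind: y => [|y1 y2 IH1 IH2|h]; first by rewrite zmul0l !zmul0r zmul0l.
  by rewrite zmulBl zmulBr IH1 IH2 zmulBr zmulBl.
elim/ZG_ind: z => [|z1 z2 IH1 IH2|k]; first by rewrite !zmul0r.
  by rewrite !zmulBr IH1 IH2.
by rewrite !zmul_basis gmulA.
Qed.

Lemma zmulDr : right_distributive (@zmul n m) +%R.
Proof.
move=> x y z; elim/ZG_ind: x => [|x1 x2 IH1 IH2|g]; first by rewrite !zmul0l addr0.
  by rewrite !zmulBl IH1 IH2 opprD addrACA.
by rewrite !zmul_basisl raddfD.
Qed.

Lemma zmul1r : left_id (zone n m) (@zmul n m).
Proof.
elim/ZG_ind => [|x y IHx IHy|g]; first exact: zmul0r.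
  by rewrite zmulBr IHx IHy.
by rewrite zmul_basis gmul1g.
Qed.

Lemma zmulr1 : right_id (zone n m) (@zmul n m).
Proof.
elim/ZG_ind => [|x y IHx IHy|g]; first exact: zmul0l.
  by rewrite zmulBl IHx IHy.
by rewrite zmul_basis gmulg1.
Qed.

Lemma deg_basis g : deg (basis g) = 1.
Proof. exact: degU. Qed.

Lemma zone_neq0 : zone n m != 0.
Proof. by apply/eqP => /(congr1 (@deg _)); rewrite deg_basis raddf0. Qed.

HB.instance Definition _ := GRing.Lmodule.on (ZG n m).
HB.instance Definition _ := GRing.Zmodule_isNzRing.Build (ZG n m)
  zmulA zmul1r zmulr1 zmulDl zmulDr zone_neq0.

Lemma zmulE x y : zmul x y = x * y.
Proof. by []. Qed.

Lemma basis1 : basis (gone n m) = 1.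
Proof. by []. Qed.

Lemma basisM g h : basis (gmul g h) = basis g * basis h.
Proof. by rewrite -zmul_basis. Qed.

Lemma basis_prod_letters g :
  basis g = \prod_(p <- letters g) basis (letter_elt p.1 p.2).
Proof. by rewrite -{1}[g]prod_letter_elt (big_morph _ basisM basis1). Qed.
End GroupRing.

Section Functoriality.
Variables n k m : nat.
Variable f : 'I_k -> FG m.
Local Open Scope ring_scope.
Implicit Types (x y : ZG n k) (g h : Gn n k).

Definition ext_pointwise g : Gn n m := [ffun i => ext f (g i)].

Lemma Pmap_basis g : Pmap (ext f) (basis g) = basis (ext_pointwise g).
Proof. exact: fglift_basis. Qed.

Lemma Pmap_ext_is_zmod_morphism : zmod_morphism (@Pmap n k m (ext f)).
Proof. exact: lift_is_additive. Qed.

HB.instance Definition _ :=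
  GRing.isZmodMorphism.Build (ZG n k) (ZG n m) (Pmap (ext f)) Pmap_ext_is_zmod_morphism.

Lemma Pmap_ext_is_monoid_morphism : monoid_morphism (@Pmap n k m (ext f)).
Proof.
split=> [|x y].
  by rewrite -basis1 Pmap_basis; congr basis; apply/ffunP => i; rewrite !ffunE ext_one.
elim/ZG_ind: x => [|x1 x2 IH1 IH2|g]; first by rewrite !mul0r raddf0 mul0r.
  by rewrite mulrBl !raddfB /= IH1 IH2 mulrBl.
elim/ZG_ind: y => [|y1 y2 IH1 IH2|h]; first by rewrite !mulr0 raddf0 mulr0.
  by rewrite mulrBr !raddfB /= IH1 IH2 mulrBr.
rewrite -basisM !Pmap_basis -basisM; congr basis.
by apply/ffunP => i; rewrite !ffunE ext_mul.
Qed.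

HB.instance Definition _ :=
  GRing.isMonoidMorphism.Build (ZG n k) (ZG n m) (Pmap (ext f)) Pmap_ext_is_monoid_morphism.

Lemma deg_Pmap x : deg (Pmap (ext f) x) = deg x.
Proof.
elim/ZG_ind: x => [|x y IHx IHy|g]; first by rewrite !raddf0.
  by rewrite !raddfB /= IHx IHy.
by rewrite Pmap_basis !deg_basis.
Qed.
End Functoriality.

Section IdealPowers.
Variables n m : nat.
Local Open Scope ring_scope.
Implicit Types (P Q : ZG n m -> Prop) (x y a b : ZG n m) (g h : Gn n m).

Lemma addspan0 P : addspan P 0.
Proof. by exists [::]; rewrite big_nil. Qed.

Lemma addspan1 P x : P x -> addspan P x.
Proof. by move=> Px; exists [:: x]; rewrite big_seq1; split=> // y; rewrite inE => /eqP ->. Qed.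

Lemma addspanD P x y : addspan P x -> addspan P y -> addspan P (x + y).
Proof.
move=> [s [Ps ->]] [t [Pt ->]]; exists (s ++ t); rewrite big_cat; split=> // z.
by rewrite mem_cat => /orP[/Ps|/Pt].
Qed.

Lemma addspanN P x : (forall y, P y -> P (- y)) -> addspan P x -> addspan P (- x).
Proof.
move=> PN [s [Ps ->]]; exists (map -%R s); rewrite big_map sumrN; split=> // z.
by case/mapP => y /Ps Py ->; apply: PN.
Qed.

Lemma addspan_sub P Q x : (forall y, P y -> Q y) -> addspan P x -> addspan Q x.
Proof. by move=> PQ [s [Ps ->]]; exists s; split=> // y /Ps /PQ. Qed.

Lemma aug_idealN b : aug_ideal b -> aug_ideal (- b).
Proof. by rewrite /aug_ideal degN => ->. Qed.

Lemma aug_ideal_basisB1 g : aug_ideal (basis g - 1).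
Proof. by rewrite /aug_ideal degB !deg_basis subrr. Qed.

Lemma aug_ideal_ind P : P 0 -> (forall x y, P x -> P y -> P (x - y)) ->
  (forall g, P (basis g - 1)) -> forall b, aug_ideal b -> P b.
Proof.
move=> P0 PB Pg; suff Pdeg b : P (b - 1 *~ deg b).
  by move=> b db; have := Pdeg b; rewrite db mulr0z subr0.
elim/ZG_ind: b => [|x y Px Py|g]; first by rewrite raddf0 mulr0z subr0.
  by rewrite degB mulrzBr subrACA; apply: PB.
by rewrite deg_basis; apply: Pg.
Qed.

Lemma idealpow0 r : idealpow r (0 : ZG n m).
Proof. by case: r => //= r; apply: addspan0. Qed.

Lemma idealpowN r x : idealpow r x -> idealpow r (- x).
Proof.
case: r => //= r; apply: addspanN => _ [a [b [Ha [Hb ->]]]].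
by exists a, (- b); rewrite !zmulE mulrN; do !split=> //; apply: aug_idealN.
Qed.

Lemma idealpowD r x y : idealpow r x -> idealpow r y -> idealpow r (x + y).
Proof. by case: r => //= r; apply: addspanD. Qed.

Lemma idealpowB r x y : idealpow r x -> idealpow r y -> idealpow r (x - y).
Proof. by move=> Ix /idealpowN; apply: idealpowD. Qed.

Lemma idealpowM r a b : idealpow r a -> aug_ideal b -> idealpow r.+1 (a * b).
Proof. by move=> Ia Ib; apply: addspan1; exists a, b. Qed.

Lemma idealpowS r x : idealpow r.+1 x -> idealpow r x.
Proof.
elim: r x => // r IH x; apply: addspan_sub => _ [a [b [Ia [Ib ->]]]].
by exists a, b; split=> //; apply: IH.
Qed.

Lemma idealpow_le r r' x : (r <= r')%N -> idealpow r' x -> idealpow r x.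
Proof.
move/subnKC <-; elim: (r' - r)%N => [|k IH]; rewrite ?addn0 // addnS.
by move/idealpowS; apply: IH.
Qed.

Definition aug_monomial g (xs : nat -> Gn n m) (r : nat) : ZG n m :=
  basis g * \prod_(j < r) (basis (xs j) - 1).

Lemma aug_monomialS g xs r :
  aug_monomial g xs r.+1 = aug_monomial g xs r * (basis (xs r) - 1).
Proof. by rewrite /aug_monomial big_ord_recr mulrA. Qed.

Lemma aug_monomial_eq0 g xs r i :
  (i < r)%N -> xs i = gone n m -> aug_monomial g xs r = 0.
Proof.
move=> ltir xsi; elim: r ltir => // r IH; rewrite ltnS leq_eqVlt aug_monomialS.
by case/orP => [/eqP <-|/IH ->]; rewrite ?xsi ?basis1 ?subrr ?mulr0 ?mul0r.
Qed.

Lemma idealpow_ind r P : P 0 -> (forall x y, P x -> P y -> P (x - y)) ->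
  (forall g xs, P (aug_monomial g xs r)) -> forall x, idealpow r x -> P x.
Proof.
elim: r P => [|r IH] P P0 PB Pmon x /=.
  move=> _; elim/ZG_ind: x => [|x y|g] //; first exact: PB.
  by have := Pmon g (fun=> g); rewrite /aug_monomial big_ord0 mulr1.
have PD y z : P y -> P z -> P (y + z).
  by move=> Py Pz; rewrite -[z]opprK -[- z]sub0r; apply/(PB _ _ Py)/PB.
case=> s [Ps ->]; elim: s Ps => [|t s IHs] Ps; first by rewrite big_nil.
rewrite big_cons; apply: PD; last by apply: IHs => y ys; apply: Ps; rewrite inE ys orbT.
have [a [b [Ia [Ib ->]]]] := Ps t (mem_head _ _); rewrite zmulE.
apply: (IH (fun a => P (a * b))) => //; first by rewrite mul0r.
  by move=> y z Py Pz; rewrite mulrBl; apply: PB.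
move=> g xs; apply: (aug_ideal_ind (P := fun b => P (aug_monomial g xs r * b))) => //.
- by rewrite mulr0.
- by move=> y z Py Pz; rewrite mulrBr; apply: PB.
move=> h; have := Pmon g (fun j => if j == r then h else xs j).
rewrite aug_monomialS eqxx /aug_monomial.
by under eq_bigr => j _ do rewrite (ltn_eqF (ltn_ord j)).
Qed.

Lemma idealpow_Pmap k (f : 'I_k -> FG m) r (x : ZG n k) :
  idealpow r x -> idealpow r (Pmap (ext f) x).
Proof.
elim: r x => // r IH _ [s [Is ->]]; exists (map (Pmap (ext f)) s).
rewrite big_map raddf_sum; split=> // _ /mapP[t ts ->].
have [a [b [Ia [Ib ->]]]] := Is t ts; exists (Pmap (ext f) a), (Pmap (ext f) b).
by rewrite !zmulE rmorphM /aug_ideal deg_Pmap; split=> //; apply: IH.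
Qed.
End IdealPowers.

Lemma idealpow_subfunctor n r : subfunctor (fun m => @idealpow n m r).
Proof.
split; first by move=> m; apply: idealpow0.
split; first by move=> m x y; apply: idealpowB.
by move=> k m f x; apply: idealpow_Pmap.
Qed.

Lemma Pmap_aug_monomial n k m (f : 'I_k -> FG m) (g : Gn n k) xs r :
  Pmap (ext f) (aug_monomial g xs r) =
  aug_monomial (ext_pointwise f g) (fun j => ext_pointwise f (xs j)) r.
Proof.
rewrite rmorphM rmorph_prod /= Pmap_basis.
by under eq_bigr do rewrite rmorphB rmorph1 /= Pmap_basis.
Qed.

Section UniversalMonomial.
Variables n d : nat.
Local Open Scope ring_scope.
Local Notation N := #|{: 'I_d.+2 * 'I_n}|.

Definition univ_var (j : 'I_d.+2) : Gn n N := [ffun c => gen (enum_rank (j, c))].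

Definition univ_monomial : ZG n N :=
  aug_monomial (univ_var ord0) (fun j => univ_var (inord j.+1)) d.+1.

(* Generators of row [j.+1] get colour [j]; the colour of row [0] is irrelevant. *)
Definition univ_colour (t : 'I_N) : 'I_d.+1 := inord (enum_val t).1.-1.

Lemma kill_univ_monomial i : Pmap (ext (kill univ_colour i)) univ_monomial = 0.
Proof.
rewrite Pmap_aug_monomial; apply: (aug_monomial_eq0 _ (ltn_ord i)).
apply/ffunP => c; rewrite !ffunE ext_gen /kill /univ_colour enum_rankK /=.
by rewrite inordK ?inord_val ?eqxx // ltnS.
Qed.

Definition univ_subst m (g : Gn n m) (xs : nat -> Gn n m) (t : 'I_N) : FG m :=
  let: (j, c) := enum_val t in (if nat_of_ord j is j'.+1 then xs j' else g) c.

Lemma Pmap_univ_monomial m g xs :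
  Pmap (ext (@univ_subst m g xs)) univ_monomial = aug_monomial g xs d.+1.
Proof.
have ext_var j : ext_pointwise (univ_subst g xs) (univ_var j) =
                 if nat_of_ord j is j'.+1 then xs j' else g.
  by apply/ffunP => c; rewrite !ffunE ext_gen /univ_subst enum_rankK; case: (nat_of_ord j).
rewrite Pmap_aug_monomial /aug_monomial ext_var.
congr (_ * _); apply: eq_bigr => j _.
by rewrite ext_var inordK // ltnS.
Qed.
End UniversalMonomial.

Lemma idealpow_sub_Kdn n d m (x : ZG n m) : idealpow d.+1 x -> Kdn d x.
Proof.
move=> Ix S [S0 [SB Snat]] Spoly; apply: (idealpow_ind (S0 m) (@SB m)) Ix => g xs.
rewrite -Pmap_univ_monomial; apply: Snat; apply: (Spoly _ (@univ_colour n d)) => i.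
by rewrite kill_univ_monomial.
Qed.

Lemma size_filter_predC1 (T : eqType) (c : T) s :
  uniq s -> (size s <= (size [seq i <- s | i != c]).+1)%N.
Proof.
move=> us; rewrite size_filter -(count_predC (pred1 c) s) addnC -addn1 leq_add2l.
by rewrite count_uniq_mem ?leq_b1.
Qed.

Section CrossEffect.
Variables n N d : nat.
Variable col : 'I_N -> 'I_d.+1.
Local Open Scope ring_scope.
Local Notation kill_map i := (@Pmap n N N (ext (kill col i))).
Implicit Types (s : seq 'I_d.+1) (x y u : ZG n N).

Fixpoint cross_proj s x : ZG n N :=
  if s is i :: s' then cross_proj s' x - cross_proj s' (kill_map i x) else x.

Lemma cross_projB s : zmod_morphism (cross_proj s).
Proof. by elim: s => //= i s IH x y; rewrite raddfB /= !IH subrACA. Qed.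

HB.instance Definition _ s := GRing.isZmodMorphism.Build _ _ (cross_proj s) (cross_projB s).

Lemma idealpow_cross_proj r s x : idealpow r x -> idealpow r (cross_proj s x).
Proof.
elim: s x => //= i s IH x Ix.
by apply: idealpowB; apply: IH => //; apply: idealpow_Pmap.
Qed.

Lemma idealpow_sub_cross_proj r s x :
  (forall i, idealpow r (kill_map i x)) -> idealpow r (x - cross_proj s x).
Proof.
move=> Ik; elim: s => [|i s IH] /=; first by rewrite subrr; apply: idealpow0.
by rewrite opprB addrCA; apply: idealpowD => //; apply: idealpow_cross_proj.
Qed.

Lemma cross_projMr s y u c :
  (forall i, kill_map i u = if i == c then 0 else u) ->
  cross_proj s (y * u) = cross_proj [seq i <- s | i != c] y * u.
Proof.
move=> ku; elim: s y => //= i s IH y; rewrite rmorphM /= ku.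
case: (eqVneq i c) => [->|nic] /=; first by rewrite mulr0 raddf0 subr0 IH.
by rewrite !IH mulrBl.
Qed.

Lemma kill_letter_elt i c (x : letter N) :
  kill_map i (basis (letter_elt c x) - 1) =
  if col x.1 == i then 0 else basis (letter_elt c x) - 1.
Proof.
rewrite rmorphB rmorph1 /= Pmap_basis; case: ifP => colx; last first.
  by congr (basis _ - 1); apply/ffunP => j; rewrite !ffunE; case: (j == c);
    rewrite ?ext_one // ext_fletter -ext_letter_gen /ext_letter /kill colx.
suff -> : ext_pointwise (kill col i) (letter_elt c x) = gone n N by rewrite basis1 subrr.
apply/ffunP => j; rewrite !ffunE; case: (j == c); rewrite ?ext_one //.
by rewrite ext_fletter /ext_letter /kill colx finv1; case: x.2.
Qed.

Lemma cross_proj_prod_letters s l : uniq s ->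
  idealpow (size s) (cross_proj s (\prod_(p <- l) basis (letter_elt p.1 p.2))).
Proof.
elim/last_ind: l s => [|l [c x] IH] s us.
  case: s us => [|i s] _ //.
  by rewrite big_nil [cross_proj _ _]/= rmorph1 subrr; apply: idealpow0.
rewrite big_rcons /=; set y := \prod_(p <- l) _; set u := basis (letter_elt c x) - 1.
rewrite -(subrK 1 (basis _)) -/u mulrDr mulr1 raddfD /=.
apply: idealpowD; last exact: IH.
rewrite (@cross_projMr _ _ _ (col x.1)); last by move=> i; rewrite kill_letter_elt eq_sym.
apply: (idealpow_le (size_filter_predC1 _ us)); apply: idealpowM; first by apply/IH/filter_uniq.
exact: aug_ideal_basisB1.
Qed.

Lemma idealpow_cross_proj_enum x : idealpow d.+1 (cross_proj (enum 'I_d.+1) x).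
Proof.
elim/ZG_ind: x => [|x y Ix Iy|g]; first by rewrite raddf0; apply: idealpow0.
  by rewrite raddfB; apply: idealpowB.
have := cross_proj_prod_letters (letters g) (enum_uniq 'I_d.+1).
by rewrite size_enum_ord -basis_prod_letters.
Qed.
End CrossEffect.

Lemma idealpow_quot_poly_le n d : quot_poly_le d (fun m => @idealpow n m d.+1).
Proof.
move=> N col x Ikill; rewrite -(subrK (cross_proj col (enum 'I_d.+1) x) x).
by apply: idealpowD; [apply: idealpow_sub_cross_proj | apply: idealpow_cross_proj_enum].
Qed.

Theorem proposition2p7 (n d m : nat) (D : ZG n m) :
  @Kdn d n m D <-> @idealpow n m d.+1 D.
Proof.
split; last exact: idealpow_sub_Kdn.
by move/(_ _ (idealpow_subfunctor n d.+1)); apply; apply: idealpow_quot_poly_le.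
Qed.
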